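(* Let $\{T_v\}$ be an extended $(n,d)$-tope arrangement. For each lattice point $u$ of $(n-1)\Delta^{d-1}$ let $\mathbb T(u)=\bigcup_{\bar j\in[\bar d]}T_{u+e_{\bar j}}$. Suppose that for every lattice point $w$ of $(n+1)\Delta^{d-1}$ the graph $\bigcup_{\bar j:\,w_{\bar j}\ge1}T_{w-e_{\bar j}}$ is acyclic. Then for every lattice point $u$ of $(n-1)\Delta^{d-1}$, every tope $T$ whose graph is a subgraph of $\mathbb T(u)$ belongs to the arrangement, i.e. $T=T_v$ where $v=RD(T)$.
   Context: Fix positive integers $n,d$; graphs are subgraphs of the complete bipartite graph with left vertices $[n]$ and right vertices $[\bar d]=\{\bar1,\dots,\bar d\}$, identified with edge sets. $RD$ is the vector of right-vertex degrees; $e_{\bar j}$ a unit vector; lattice points of $k\Delta^{d-1}$ are vectors in $\mathbb Z_{\ge0}^{[\bar d]}$ with coordinate sum $k$. Two acyclic graphs are compatible if whenever both contain a perfect matching between the same $I\subseteq[n]$, $\bar J\subseteq[\bar d]$, these matchings coincide. A tope is a map $T:[n]\to[\bar d]$ (graph $\{(i,T(i))\}$), with position $RD(T)$. An extended $(n,d)$-tope arrangement is a collection of pairwise compatible topes $T_v$, one for each lattice point $v$ of $n\Delta^{d-1}$, with $RD(T_v)=v$. *)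

From mathcomp Require Import all_boot.
Set Implicit Arguments. Unset Strict Implicit. Unset Printing Implicit Defensive.

(* Left vertices [n] = 'I_n, right vertices [d-bar] = 'I_d.
   A graph is a set of edges (i, j) of the complete bipartite graph. *)
Definition bgraph (n d : nat) := {set 'I_n * 'I_d}.

Definition rvec (d : nat) := {ffun 'I_d -> nat}.

Definition RD n d (G : bgraph n d) : rvec d :=
  [ffun j => #|[set i | (i, j) \in G]|].

Definition unitv d (j : 'I_d) : rvec d := [ffun k => (k == j : nat)].
Definition addv d (u v : rvec d) : rvec d := [ffun k => u k + v k].
Definition subv d (u v : rvec d) : rvec d := [ffun k => u k - v k].

(* Lattice point of k * Delta^{d-1}. *)
Definition lattice_pt d (k : nat) (v : rvec d) : Prop := \sum_(j < d) v j = k.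

Definition adj n d (G : bgraph n d) : rel ('I_n + 'I_d) :=
  fun x y => match x, y with
             | inl i, inr j => (i, j) \in G
             | inr j, inl i => (i, j) \in G
             | _, _ => false
             end.

Definition acyclic n d (G : bgraph n d) : Prop :=
  forall s : seq ('I_n + 'I_d), uniq s -> 3 <= size s -> ~~ cycle (adj G) s.

Definition perfect_matching n d (I : {set 'I_n}) (J : {set 'I_d})
  (M : bgraph n d) : Prop :=
  [/\ M \subset setX I J,
      forall i, i \in I -> #|[set j | (i, j) \in M]| = 1
    & forall j, j \in J -> #|[set i | (i, j) \in M]| = 1].

Definition compatible n d (G1 G2 : bgraph n d) : Prop :=
  [/\ acyclic G1, acyclic G2 &
      forall (I : {set 'I_n}) (J : {set 'I_d}) (M1 M2 : bgraph n d),
        M1 \subset G1 -> M2 \subset G2 ->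
        perfect_matching I J M1 -> perfect_matching I J M2 -> M1 = M2].

Definition tope (n d : nat) := {ffun 'I_n -> 'I_d}.
Definition tgraph n d (T : tope n d) : bgraph n d := [set (i, T i) | i : 'I_n].

(* An extended (n,d)-tope arrangement, given as a map A from vectors to topes
   (only its values at lattice points of n Delta^{d-1} matter). *)
Definition ext_tope_arrangement n d (A : rvec d -> tope n d) : Prop :=
  (forall v, lattice_pt n v -> RD (tgraph (A v)) = v) /\
  (forall v w, lattice_pt n v -> lattice_pt n w ->
     compatible (tgraph (A v)) (tgraph (A w))).

From mathcomp Require Import all_boot zify.
Set Implicit Arguments. Unset Strict Implicit. Unset Printing Implicit Defensive.

(* Write Q c for the tope at u + e_c.  Two topes X, Y inside one acyclic graph
   with RD X + e_c = RD Y + e_b agree wherever Y takes the value b: otherwise,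
   alternately following Y-edges backwards and X-edges forwards from the
   positions where they differ closes a cycle.  Inside the acyclic graphs
   attached to u + e_b + e_c this shows that (l, y) is an edge of the union of
   the Q c exactly when Q y l = y, and that any two Q y, Q y' with this
   property at l agree away from l.  A tope T in that union is then compared
   with some Q k by induction on the number of disagreements: moving one
   disagreement, chosen to minimise the distance from Q (Q k i) to Q k, yields
   topes S and W closer to Q k and Q (T i), hence in the arrangement, and
   their graphs cover T inside the acyclic graph attached to RD S + e_(T i),
   which forces T to be the tope of the arrangement at RD T. *)

Lemma fcycle_orbit_iter (T : finType) (f : T -> T) x :
  exists k, fcycle f (orbit f (iter k f x)).
Proof.
have /trajectP[p lt_p_ord iter_ord] : iter (order f x) f x \in orbit f x.
  exact: looping_order.
exists p; rewrite -fconnect_f.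
have {2}-> : iter p f x = iter (order f x - p.+1) f (f (iter p f x)).
  by rewrite -iterSr -iterD subnSK // subnK 1?ltnW // iter_ord.
exact: fconnect_iter.
Qed.

Section Topes.

Variables n d : nat.
Implicit Types (T X Y : tope n d) (G : bgraph n d).

Definition tope_upd T (l : 'I_n) (z : 'I_d) : tope n d :=
  [ffun i => if i == l then z else T i].

Definition tdist T T' := #|[set l | T l != T' l]|.

Lemma addvE (v v' : rvec d) j : addv v v' j = v j + v' j.
Proof. exact: ffunE. Qed.

Lemma subvE (v v' : rvec d) j : subv v v' j = v j - v' j.
Proof. exact: ffunE. Qed.

Lemma unitvE (c j : 'I_d) : unitv c j = (j == c).
Proof. exact: ffunE. Qed.

Lemma addvAC (v : rvec d) b c :
  addv (addv v (unitv b)) (unitv c) = addv (addv v (unitv c)) (unitv b).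
Proof. by apply/ffunP => j; rewrite !addvE addnAC. Qed.

Lemma addv_unitvI (c : 'I_d) : injective (fun v : rvec d => addv v (unitv c)).
Proof.
move=> v v' /ffunP eqv; apply/ffunP => j.
by move: (eqv j); rewrite !addvE => /addIn.
Qed.

Lemma mem_tgraph T i j : ((i, j) \in tgraph T) = (T i == j).
Proof. by apply/imsetP/eqP => [[i' _ [-> ->]] // | <-]; exists i. Qed.

Lemma tgraph_subsetP T G :
  reflect (forall i, (i, T i) \in G) (tgraph T \subset G).
Proof.
apply: (iffP subsetP) => [sub i | inG _ /imsetP[i _ ->]]; last exact: inG.
by apply: sub; rewrite mem_tgraph.
Qed.

Lemma RD_tgraph_card T j : RD (tgraph T) j = #|[set i | T i == j]|.
Proof. by rewrite ffunE; apply: eq_card => i; rewrite !inE mem_tgraph. Qed.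

Lemma RD_tgraph_sum T j : RD (tgraph T) j = \sum_i (T i == j).
Proof.
by rewrite RD_tgraph_card -sum1dep_card big_mkcond; apply: eq_bigr => i _; case: eqP.
Qed.

Lemma sum_unitv (c : 'I_d) : \sum_j unitv c j = 1.
Proof. by rewrite (bigD1 c) //= big1 => [|j /negbTE]; rewrite !unitvE ?eqxx // => ->. Qed.

Lemma lattice_pt_unitv (c : 'I_d) : lattice_pt 1 (unitv c).
Proof. exact: sum_unitv. Qed.

Lemma lattice_pt_addv k k' (v v' : rvec d) :
  lattice_pt k v -> lattice_pt k' v' -> lattice_pt (k + k') (addv v v').
Proof.
rewrite /lattice_pt => <- <-; rewrite -big_split.
by apply: eq_bigr => j _; rewrite addvE.
Qed.

Lemma lattice_pt_RD_tgraph T : lattice_pt n (RD (tgraph T)).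
Proof.
rewrite /lattice_pt (eq_bigr _ (fun j _ => RD_tgraph_sum T j)) exchange_big /=.
rewrite -[n in _ = n]card_ord -sum1_card; apply: eq_bigr => i _.
by rewrite -(sum_unitv (T i)); apply: eq_bigr => j _; rewrite unitvE eq_sym.
Qed.

Lemma RD_tgraph_upd T l z :
  addv (RD (tgraph (tope_upd T l z))) (unitv (T l)) = addv (RD (tgraph T)) (unitv z).
Proof.
apply/ffunP => j; rewrite !addvE !unitvE !RD_tgraph_sum.
rewrite (bigD1 l) //= [in RHS](bigD1 l) //= ffunE eqxx.
rewrite (eq_bigr (fun i => (T i == j) : nat)) => [|i /negbTE]; last first.
  by rewrite ffunE => ->.
by rewrite [j == T l]eq_sym [j == z]eq_sym addnAC [RHS]addnAC [(z == j) + _]addnC.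
Qed.

Lemma RD_tgraph_swap X Y X' Y' :
  (forall l, (X l = X' l /\ Y l = Y' l) \/ (X l = Y' l /\ Y l = X' l)) ->
  addv (RD (tgraph X)) (RD (tgraph Y)) = addv (RD (tgraph X')) (RD (tgraph Y')).
Proof.
move=> swap; apply/ffunP => j; rewrite !addvE !RD_tgraph_sum -!big_split.
by apply: eq_bigr => l _; case: (swap l) => -[-> ->]; last exact: addnC.
Qed.

Definition zigzag (g : 'I_d -> 'I_n) (p : seq 'I_d) : seq ('I_n + 'I_d) :=
  flatten [seq [:: inr r; inl (g r)] | r <- p].

Lemma size_zigzag g p : size (zigzag g p) = (size p).*2.
Proof. by elim: p => //= r p ->; rewrite doubleS. Qed.

Lemma zigzag_uniq g p : uniq p -> {in p &, injective g} -> uniq (zigzag g p).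
Proof.
elim: p => //= r p IH /andP[r_p uniq_p] g_inj.
have g_inj_p : {in p &, injective g}.
  by move=> x y xp yp; apply: g_inj; rewrite inE ?xp ?yp orbT.
have r_notin : inr r \notin zigzag g p.
  apply/flatten_mapP => -[y yp]; rewrite !inE => /orP[] /eqP // [ry].
  by rewrite ry yp in r_p.
have gr_notin : inl (g r) \notin zigzag g p.
  apply/flatten_mapP => -[y yp]; rewrite !inE => /orP[] /eqP // [/g_inj gr_gy].
  by move: r_p; rewrite gr_gy ?mem_head ?inE ?yp ?orbT.
by rewrite IH // andbT in_cons negb_or r_notin gr_notin.
Qed.

Lemma path_zigzag G h g x q z :
  fpath h x (rcons q z) ->
  {in x :: q, forall r, (g r, r) \in G /\ (g r, h r) \in G} ->
  path (adj G) (inl (g x)) (rcons (zigzag g q) (inr z)).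
Proof.
elim: q x => [|y q IH] x /=.
  by rewrite andbT => /eqP <- /(_ x (mem_head _ _)) [_ ->].
move=> /andP[/eqP hx path_q] edges.
have [_ gx_hx] := edges x (mem_head _ _).
have [gy_y _] : (g y, y) \in G /\ (g y, h y) \in G.
  by apply: edges; rewrite !inE eqxx orbT.
rewrite -{1}hx gx_hx gy_y /=; apply: IH => // r r_yq.
by apply: edges; rewrite inE r_yq orbT.
Qed.

Lemma cycle_zigzag G h g p :
  fcycle h p -> {in p, forall r, (g r, r) \in G /\ (g r, h r) \in G} ->
  cycle (adj G) (zigzag g p).
Proof.
case: p => //= x q path_q edges.
have [gx_x _] := edges x (mem_head _ _).
apply/andP; split => //; apply: (path_zigzag path_q edges).
Qed.

Lemma acyclic_tope_eq G X Y :
  acyclic G -> tgraph X \subset G -> tgraph Y \subset G ->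
  (forall l, X l != Y l -> exists2 l', X l' != Y l' & Y l' = X l) -> X = Y.
Proof.
move=> acycG /tgraph_subsetP XG /tgraph_subsetP YG closed.
apply/ffunP => l0; apply/eqP/negPn/negP => neq_l0.
pose E := [set l | X l != Y l].
pose g (r : 'I_d) : 'I_n := odflt l0 [pick l in E | Y l == r].
pose h (r : 'I_d) : 'I_d := X (g r).
have gP r : r \in Y @: E -> g r \in E /\ Y (g r) = r.
  case/imsetP=> l lE ->; rewrite /g; case: pickP => [l' /andP[l'E /eqP] //|].
  by move/(_ l); rewrite lE eqxx.
have hE r : r \in Y @: E -> h r \in Y @: E.
  move/gP=> [gE _]; rewrite inE /h in gE *; have [l' l'E <-] := closed _ gE.
  by apply: imset_f; rewrite inE.
have [k cyc] := fcycle_orbit_iter h (Y l0).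
set y := iter k h (Y l0) in cyc.
have orbit_E : {subset orbit h y <= Y @: E}.
  have iterE i r : r \in Y @: E -> iter i h r \in Y @: E.
    by move=> rE; elim: i => //= i; apply: hE.
  move=> r /trajectP[i _ ->]; rewrite /y -iterD; apply: iterE.
  by apply: imset_f; rewrite inE.
have hy_neq : h y != y.
  have [yE gy] := gP y (orbit_E y (in_orbit h y)).
  by rewrite /h -{2}gy; rewrite inE in yE.
have size_orbit2 : 1 < size (orbit h y).
  move: cyc; rewrite size_orbit /orbit.
  by case: (order h y) (order_gt0 h y) => [|[|m]] //= _; rewrite andbT (negbTE hy_neq).
have zz_uniq : uniq (zigzag g (orbit h y)).
  apply: zigzag_uniq; first exact: orbit_uniq.
  by move=> r r' /orbit_E/gP[_ gr] /orbit_E/gP[_ gr'] grr'; rewrite -gr -gr' grr'.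
have zz_size : 3 <= size (zigzag g (orbit h y)).
  by rewrite size_zigzag -addnn (leq_add size_orbit2 (ltnW size_orbit2)).
apply/negP: (acycG _ zz_uniq zz_size); rewrite negbK.
apply: (cycle_zigzag cyc) => r /orbit_E/gP[_ gr].
by split; [rewrite -{2}gr; apply: YG | apply: XG].
Qed.

Lemma acyclic_RD_shift G X Y b c :
  acyclic G -> tgraph X \subset G -> tgraph Y \subset G ->
  addv (RD (tgraph X)) (unitv c) = addv (RD (tgraph Y)) (unitv b) ->
  forall l, Y l = b -> X l = b.
Proof.
move=> acycG XG YG shift l0 Yl0; apply/eqP/negPn/negP => neq_l0.
suff XY : X = Y by rewrite XY Yl0 eqxx in neq_l0.
apply: (acyclic_tope_eq acycG XG YG) => l neq_l.
have [Xl_b | Xl_neq_b] := eqVneq (X l) b; first by exists l0; rewrite Yl0.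
case: (pickP [pred l' | (X l' != Y l') && (Y l' == X l)]) => [l' /andP[? /eqP] | none].
  by exists l'.
have fibre_lt : #|[set i | Y i == X l]| < #|[set i | X i == X l]|.
  apply: proper_card; apply/properP; split; last by exists l; rewrite !inE // eq_sym.
  apply/subsetP => i; rewrite !inE => /eqP Yi; move/negbT: (none i).
  by rewrite /= Yi eqxx andbT negbK.
move/ffunP/(_ (X l)): shift; rewrite !addvE !unitvE (negbTE Xl_neq_b) addn0.
by rewrite !RD_tgraph_card => fibre_eq; move: fibre_lt; rewrite -fibre_eq ltnNge leq_addr.
Qed.

Lemma acyclic_RD_inj G X Y :
  acyclic G -> tgraph X \subset G -> tgraph Y \subset G ->
  RD (tgraph X) = RD (tgraph Y) -> X = Y.
Proof.
move=> acycG XG YG eqRD; apply/ffunP => i.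
by apply: (acyclic_RD_shift (c := Y i) acycG XG YG) => //; rewrite eqRD.
Qed.

End Topes.

Definition union_below n d (A : rvec d -> tope n d) (w : rvec d) : bgraph n d :=
  \bigcup_(j : 'I_d | 1 <= w j) tgraph (A (subv w (unitv j))).

Section UnionBelow.

Variables (n d : nat) (A : rvec d -> tope n d).
Hypothesis RD_A : forall v, lattice_pt n v -> RD (tgraph (A v)) = v.

Lemma tgraph_sub_union_below v c :
  tgraph (A v) \subset union_below A (addv v (unitv c)).
Proof.
apply: (bigcup_max c); first by rewrite addvE unitvE eqxx addn1.
have -> // : subv (addv v (unitv c)) (unitv c) = v.
by apply/ffunP => j; rewrite subvE addvE addnK.
Qed.

Lemma tope_eq_of_acyclic_union_below T c :
  acyclic (union_below A (addv (RD (tgraph T)) (unitv c))) ->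
  tgraph T \subset union_below A (addv (RD (tgraph T)) (unitv c)) ->
  T = A (RD (tgraph T)).
Proof.
move=> acyc_w T_sub; apply: (acyclic_RD_inj acyc_w T_sub).
  exact: tgraph_sub_union_below.
by rewrite RD_A //; apply: lattice_pt_RD_tgraph.
Qed.

End UnionBelow.

Section Tube.

Variables (n d : nat) (A : rvec d -> tope n d) (u : rvec d).
Hypothesis n_gt0 : 0 < n.
Hypothesis RD_A : forall v, lattice_pt n v -> RD (tgraph (A v)) = v.
Hypothesis acyclic_below :
  forall w, lattice_pt n.+1 w -> acyclic (union_below A w).
Hypothesis u_pt : lattice_pt n.-1 u.

Let Q (c : 'I_d) := A (addv u (unitv c)).
Let tube := \bigcup_(j : 'I_d) tgraph (Q j).

Lemma RD_Q c : RD (tgraph (Q c)) = addv u (unitv c).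
Proof.
apply: RD_A; rewrite -[n](prednK n_gt0) -addn1.
exact: lattice_pt_addv u_pt (lattice_pt_unitv c).
Qed.

Lemma acyclic_union_below_Q b c :
  acyclic (union_below A (addv (addv u (unitv b)) (unitv c))).
Proof.
apply: acyclic_below; rewrite -addn1 -[n in n + 1](prednK n_gt0) -addn1.
by do 2![apply: lattice_pt_addv; last exact: lattice_pt_unitv].
Qed.

Lemma Q_sub_union_below b c :
  tgraph (Q b) \subset union_below A (addv (addv u (unitv b)) (unitv c)) /\
  tgraph (Q c) \subset union_below A (addv (addv u (unitv b)) (unitv c)).
Proof. by split; last rewrite addvAC; apply: tgraph_sub_union_below. Qed.

Lemma Q_fix c l : Q (Q c l) l = Q c l.
Proof.
set b := Q c l; have [Qb_sub Qc_sub] := Q_sub_union_below b c.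
apply: (acyclic_RD_shift (acyclic_union_below_Q b c) Qb_sub Qc_sub) => //.
by rewrite !RD_Q addvAC.
Qed.

Lemma Q_agree y y' l l' :
  Q y l = y -> Q y' l = y' -> l' != l -> Q y l' = Q y' l'.
Proof.
move=> Qy_l Qy'_l l'_ne_l; have [Qy_sub Qy'_sub] := Q_sub_union_below y y'.
suff <- : tope_upd (Q y) l y' = Q y' by rewrite ffunE (negbTE l'_ne_l).
apply: (acyclic_RD_inj (acyclic_union_below_Q y y') _ Qy'_sub).
  apply/tgraph_subsetP => i; rewrite ffunE; case: eqP => [->|_].
    by apply: (subsetP Qy'_sub); rewrite mem_tgraph Qy'_l.
  by apply: (subsetP Qy_sub); rewrite mem_tgraph.
apply: (@addv_unitvI _ y); rewrite -{2}Qy_l RD_tgraph_upd !RD_Q.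
exact: addvAC.
Qed.

Lemma mem_tube l y : ((l, y) \in tube) = (Q y l == y).
Proof.
apply/bigcupP/eqP => [[j _] | Qy_l]; last by exists y; rewrite ?mem_tgraph ?Qy_l.
by rewrite mem_tgraph => /eqP <-; apply: Q_fix.
Qed.

Lemma tgraph_sub_tubeP (T : tope n d) :
  reflect (forall l, Q (T l) l = T l) (tgraph T \subset tube).
Proof.
apply: (iffP (tgraph_subsetP _ _)) => [T_sub l | T_fix l].
  by apply/eqP; rewrite -mem_tube.
by rewrite mem_tube T_fix.
Qed.

Lemma exists_Q_fix_diff a k : a != k -> exists2 l, Q a l = a & Q k l != a.
Proof.
move=> a_ne_k.
case: (pickP [pred l | (Q a l == a) && (Q k l != a)]) => [l /andP[/eqP] | none].
  by exists l.
have fibre_sub : [set l | Q a l == a] \subset [set l | Q k l == a].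
  apply/subsetP => l; rewrite !inE => Qa_l.
  by move/negbT: (none l); rewrite /= Qa_l negbK.
move: (subset_leq_card fibre_sub); rewrite -!RD_tgraph_card !RD_Q !addvE !unitvE.
by rewrite eqxx (negbTE a_ne_k) addn1 addn0 ltnn.
Qed.

Lemma Q_dist_lt a k l :
  Q a l != Q k l -> tdist (Q (Q k l)) (Q k) < tdist (Q a) (Q k).
Proof.
have [m] := ubnP (tdist (Q a) (Q k)); elim: m a => // m IH a dist_lt Qa_l.
have a_ne_k : a != k by apply: contraNneq Qa_l => ->.
have [l0 Qa_l0 Qk_l0] := exists_Q_fix_diff a_ne_k.
set a1 := Q k l0.
have agree l' : l' != l0 -> Q a l' = Q a1 l' := Q_agree Qa_l0 (Q_fix k l0).
have dist_a : tdist (Q a) (Q k) = (tdist (Q a1) (Q k)).+1.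
  rewrite /tdist (cardsD1 l0) inE Qa_l0 eq_sym Qk_l0 add1n; congr _.+1.
  apply: eq_card => l'; rewrite !inE.
  by case: eqVneq => [->|/agree ->] //=; rewrite Q_fix eqxx.
have [->|l_ne_l0] := eqVneq l l0; first by rewrite dist_a.
rewrite dist_a ltnS; apply/ltnW/IH; first by rewrite -ltnS -dist_a.
by rewrite -agree.
Qed.

Lemma exists_Q_agree k (D : {set 'I_n}) i0 :
  i0 \in D -> exists2 i, i \in D & {in D, forall l, Q (Q k i) l = Q k l}.
Proof.
move=> i0D.
case: (@arg_minnP _ i0 (mem D) (fun i => tdist (Q (Q k i)) (Q k)) i0D) => i iD i_min.
exists i => // l lD; apply/eqP/negPn/negP => /Q_dist_lt.
by rewrite ltnNge i_min.
Qed.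

Lemma tube_tope_step m k (T : tope n d) i :
  (forall k' (T' : tope n d), tgraph T' \subset tube -> tdist T' (Q k') <= m ->
     T' = A (RD (tgraph T'))) ->
  tgraph T \subset tube -> tdist T (Q k) = m.+1 -> T i != Q k i ->
  {in [set l | T l != Q k l], forall l, Q (Q k i) l = Q k l} ->
  T = A (RD (tgraph T)).
Proof.
move=> IH /tgraph_sub_tubeP T_fix dist_T Ti_ne agree.
rewrite /tdist in dist_T; set D := [set l | T l != Q k l] in agree dist_T.
set a := Q k i; set b := T i.
have iD : i \in D by rewrite inE.
have card_Di : #|D :\ i| = m by apply/succn_inj; rewrite -dist_T (cardsD1 i D) iD.
have Qa_i : Q a i = a := Q_fix k i.
have Qb_agree l : l \in D :\ i -> Q b l = Q k l.
  by case/setD1P=> l_ne_i lD; rewrite -(agree l lD) (Q_agree (T_fix i) Qa_i).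
pose S := tope_upd T i a.
pose W : tope n d := [ffun l => if l \in D :\ i then T l else Q b l].
have Wi : W i = b by rewrite ffunE setD11 /= T_fix.
have S_eq : S = A (RD (tgraph S)).
  apply: (IH k).
    by apply/tgraph_sub_tubeP => l; rewrite ffunE; case: eqP => [->|].
  rewrite /tdist -card_Di; apply/subset_leq_card/subsetP => l; rewrite !inE ffunE.
  by case: (eqVneq l i) => [->|l_ne_i]; rewrite ?eqxx // (negbTE l_ne_i) l_ne_i.
have W_eq : W = A (RD (tgraph W)).
  apply: (IH b).
    by apply/tgraph_sub_tubeP => l; rewrite ffunE; case: ifP => _; rewrite ?Q_fix.
  rewrite /tdist -card_Di; apply/subset_leq_card/subsetP => l; rewrite !inE ffunE.
  by case: ifP => [lDi _ | _]; [move: lDi; rewrite !inE | rewrite eqxx].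
have swap l : (W l = S l /\ Q k l = Q b l) \/ (W l = Q b l /\ Q k l = S l).
  rewrite !ffunE; case: ifPn => [lDi | lDi]; [left | right].
    by have [l_ne_i _] := setD1P lDi; rewrite (negbTE l_ne_i) (Qb_agree _ lDi).
  split=> //; case: eqVneq => [-> // | l_ne_i].
  by apply/esym/eqP; move: lDi; rewrite !inE l_ne_i negbK.
have RD_WS : addv (RD (tgraph W)) (unitv k) = addv (RD (tgraph S)) (unitv b).
  move/ffunP: (RD_tgraph_swap swap); rewrite !RD_Q => RD_eq.
  by apply/ffunP => j; move: (RD_eq j); rewrite !addvE; lia.
have RD_TS : addv (RD (tgraph T)) (unitv a) = addv (RD (tgraph S)) (unitv b).
  have T_upd : T = tope_upd S i b.
    by apply/ffunP => l; rewrite !ffunE; case: eqP => [->|].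
  have Si : S i = a by rewrite ffunE eqxx.
  by rewrite {1}T_upd -{1}Si RD_tgraph_upd.
apply: (tope_eq_of_acyclic_union_below RD_A (c := a)).
  apply: acyclic_below; rewrite -addn1.
  exact: lattice_pt_addv (lattice_pt_RD_tgraph T) (lattice_pt_unitv a).
rewrite RD_TS; apply/tgraph_subsetP => l; case: (eqVneq l i) => [-> | l_ne_i].
  have := tgraph_sub_union_below A (RD (tgraph W)) k.
  by rewrite -W_eq RD_WS => /subsetP; apply; rewrite mem_tgraph Wi.
have := tgraph_sub_union_below A (RD (tgraph S)) b.
by rewrite -S_eq => /subsetP; apply; rewrite mem_tgraph ffunE (negbTE l_ne_i).
Qed.

Lemma tube_tope_eq_dist m k (T : tope n d) :
  tgraph T \subset tube -> tdist T (Q k) < m -> T = A (RD (tgraph T)).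
Proof.
elim: m k T => // m IH k T T_tube.
rewrite ltnS leq_eqVlt => /orP[/eqP dist_T | ]; last exact: IH.
case: m dist_T IH => [| m] dist_T IH.
  have -> : T = Q k.
    apply/ffunP => l; apply/eqP/negPn/negP => T_ne.
    by move/card0_eq/(_ l): dist_T; rewrite !inE T_ne.
  by rewrite RD_Q.
have [i0 i0D] : exists i0, i0 \in [set l | T l != Q k l].
  by apply/card_gt0P; rewrite -/(tdist _ _) dist_T.
have [i iD agree] := exists_Q_agree k i0D.
apply: (tube_tope_step _ T_tube dist_T _ agree); last by rewrite inE in iD.
by move=> k' T' T'_tube dist_T'; apply: (IH k'); rewrite // ltnS.
Qed.

Lemma tube_tope_eq (T : tope n d) : tgraph T \subset tube -> T = A (RD (tgraph T)).
Proof.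
move=> T_tube.
exact: (tube_tope_eq_dist (k := T (Ordinal n_gt0)) T_tube (ltnSn _)).
Qed.

End Tube.

Theorem mainTheorem10 (n d : nat) (A : rvec d -> tope n d) :
  0 < n -> 0 < d ->
  ext_tope_arrangement A ->
  (forall w : rvec d, lattice_pt n.+1 w ->
     acyclic (\bigcup_(j : 'I_d | 1 <= w j) tgraph (A (subv w (unitv j))))) ->
  forall u : rvec d, lattice_pt n.-1 u ->
  forall T : tope n d,
    tgraph T \subset \bigcup_(j : 'I_d) tgraph (A (addv u (unitv j))) ->
    T = A (RD (tgraph T)).
Proof.
move=> n_gt0 _ [RD_A _] acyclic_below u u_pt T.
exact: tube_tope_eq n_gt0 RD_A acyclic_below u_pt T.
Qed.
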